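(* Let $\Sigma$ be an alphabet. The set $\mathrm{RevL}(\mathbb{F}_2,\Sigma)$ is closed under the Boolean operations (complementation in $\Sigma^*$, finite intersection and finite union).
   Context: $\mathbb{F}_2$ is the two-element field. For a semiring $S$ and finite nonempty alphabet $\Sigma$, a series is a map $r\colon\Sigma^*\to S$ with value $(r,w)$ and support $\mathrm{supp}(r)=\{w\mid(r,w)\neq0\}$. A weighted automaton over $S$ and $\Sigma$ is $\mathcal{A}=(Q,\sigma,\iota,\tau)$ with $Q$ finite, $\sigma\colon Q\times\Sigma\times Q\to S$, $\iota,\tau\colon Q\to S$; a run on $w=a_1\cdots a_t$ is $q_0a_1q_1\cdots a_tq_t$ with all $\sigma(q_{k-1},a_k,q_k)\neq0$, of weight $\iota(q_0)\sigma(q_0,a_1,q_1)\cdots\sigma(q_{t-1},a_t,q_t)\tau(q_t)$, and $(\|\mathcal{A}\|,w)$ is the sum of weights of all runs on $w$. $\mathcal{A}$ is reversible if for all $p,p',q,q'\in Q$, $a\in\Sigma$: $\sigma(p,a,q)\neq0\neq\sigma(p,a,q')$ implies $q=q'$, and $\sigma(p,a,q)\neq0\neq\sigma(p',a,q)$ implies $p=p'$. $\mathrm{RevL}(S,\Sigma)$ is the set of supports of series realised by reversible weighted automata over $S$ and $\Sigma$. *)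

From HB Require Import structures.
From mathcomp Require Import all_boot all_algebra.
Set Implicit Arguments. Unset Strict Implicit. Unset Printing Implicit Defensive.
Import GRing.Theory.
Local Open Scope ring_scope.

Record wautomaton (S : pzSemiRingType) (Sigma : finType) (Q : finType) := WAutomaton {
  wa_sigma : Q -> Sigma -> Q -> S;
  wa_iota  : Q -> S;
  wa_tau   : Q -> S }.

Section WA.
Variables (S : pzSemiRingType) (Sigma : finType) (Q : finType).
Variable A : wautomaton S Sigma Q.

Definition is_run (w : seq Sigma) (r : {ffun 'I_(size w).+1 -> Q}) : bool :=
  [forall k : 'I_(size w),
     wa_sigma A (r (widen_ord (leqnSn _) k)) (tnth (in_tuple w) k) (r (lift ord0 k)) != 0].

Definition run_weight (w : seq Sigma) (r : {ffun 'I_(size w).+1 -> Q}) : S :=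
  wa_iota A (r ord0) *
  (\prod_(k < size w)
      wa_sigma A (r (widen_ord (leqnSn _) k)) (tnth (in_tuple w) k) (r (lift ord0 k))) *
  wa_tau A (r ord_max).

Definition behavior (w : seq Sigma) : S :=
  \sum_(r : {ffun 'I_(size w).+1 -> Q} | is_run r) run_weight r.

Definition support_lang : pred (seq Sigma) := fun w => behavior w != 0.

Definition reversible : Prop :=
  (forall p q q' a, wa_sigma A p a q != 0 -> wa_sigma A p a q' != 0 -> q = q') /\
  (forall p p' q a, wa_sigma A p a q != 0 -> wa_sigma A p' a q != 0 -> p = p').
End WA.

Definition RevL (S : pzSemiRingType) (Sigma : finType) (L : pred (seq Sigma)) : Prop :=
  exists (Q : finType) (A : wautomaton S Sigma Q),
    reversible A /\ forall w, L w = support_lang A w.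

From mathcomp Require Import all_boot all_algebra.
Set Implicit Arguments. Unset Strict Implicit. Unset Printing Implicit Defensive.
Import GRing.Theory.

(* Intersection: the product automaton is reversible and its behaviour is the
   pointwise product of the two behaviours; over F_2 a product is nonzero iff
   both factors are.  Complement: adding one fresh state with weight-1 loops
   on every letter (and initial/final weight 1) keeps the automaton reversible
   and adds 1 to the behaviour; over F_2, x + 1 <> 0 iff x = 0.  Finite
   intersections follow by induction from the full language (the complement of
   the empty one), and finite unions by De Morgan. *)

Lemma ffun_stepwise_const (T : eqType) n (f : 'I_n.+1 -> T) :
  (forall k : 'I_n, f (widen_ord (leqnSn n) k) = f (lift ord0 k)) ->
  forall j, f j = f ord0.
Proof.
move=> step [m lt_m]; elim: m lt_m => [|m IHm] lt_m; first by congr f; apply: val_inj.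
have lt_mn : (m < n)%N by [].
have -> : Ordinal lt_m = lift ord0 (Ordinal lt_mn) by apply: val_inj.
rewrite -step -(IHm (ltnW lt_m)); congr f; exact: val_inj.
Qed.

Section Behavior.
Local Open Scope ring_scope.
Variables (S : pzSemiRingType) (Sigma : finType).

Lemma mulr_neq0_factors (x y : S) : x * y != 0 -> (x != 0) && (y != 0).
Proof. by apply: contraNT => /nandP[] /negPn/eqP->; rewrite ?mul0r ?mulr0. Qed.

Lemma prodr_eq0_mem (I : eqType) (r : seq I) (F : I -> S) i :
  i \in r -> F i = 0 -> \prod_(j <- r) F j = 0.
Proof.
move=> + Fi0; elim: r => // j r IHr; rewrite in_cons big_cons.
by case/predU1P => [<-|/IHr->]; rewrite ?Fi0 ?mul0r ?mulr0.
Qed.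

Lemma prodr_ord_eq0 n (F : 'I_n -> S) k : F k = 0 -> \prod_(j < n) F j = 0.
Proof. exact: prodr_eq0_mem (mem_index_enum k). Qed.

Lemma behaviorE (Q : finType) (A : wautomaton S Sigma Q) w :
  behavior A w = \sum_(r : {ffun 'I_(size w).+1 -> Q}) run_weight A r.
Proof.
rewrite /behavior [RHS](bigID (is_run A (w:=w))) /= [X in _ + X]big1 ?addr0 //.
move=> r /forallPn[k]; rewrite negbK => /eqP sigma0.
by rewrite /run_weight (prodr_ord_eq0 sigma0) mulr0 mul0r.
Qed.

Definition wa_add1 (Q : finType) (A : wautomaton S Sigma Q) :
    wautomaton S Sigma (option Q) :=
  WAutomaton
    (fun p a q => match p, q with
                  | Some p, Some q => wa_sigma A p a q
                  | None, None => 1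
                  | _, _ => 0 end)
    (fun p => if p is Some p then wa_iota A p else 1)
    (fun p => if p is Some p then wa_tau A p else 1).

Section Add1.
Variables (Q : finType) (A : wautomaton S Sigma Q) (w : seq Sigma).
Notation n := (size w).

Lemma reversible_add1 : reversible A -> reversible (wa_add1 A).
Proof.
case=> fwd bwd; split.
  by move=> [p|] [q|] [q'|] a //=; rewrite ?eqxx // => sq sq'; rewrite (fwd _ _ _ _ sq sq').
by move=> [p|] [p'|] [q|] a //=; rewrite ?eqxx // => sp sp'; rewrite (bwd _ _ _ _ sp sp').
Qed.

Lemma run_weight_add1_Some (r : {ffun 'I_n.+1 -> Q}) :
  run_weight (wa_add1 A) [ffun k => Some (r k)] = run_weight A r.
Proof. by rewrite /run_weight /= !ffunE; under eq_bigr do rewrite !ffunE. Qed.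

Lemma run_weight_add1_None :
  run_weight (wa_add1 A) [ffun _ : 'I_n.+1 => None] = 1.
Proof. by rewrite /run_weight /= !ffunE big1 ?mulr1 // => k _; rewrite !ffunE. Qed.

Lemma run_weight_add1_mixed (r : {ffun 'I_n.+1 -> option Q}) i j :
  r i = None -> r j != None -> run_weight (wa_add1 A) r = 0.
Proof.
move=> ri rj; have [k switch] : exists k : 'I_n,
    (r (widen_ord (leqnSn n) k) == None) != (r (lift ord0 k) == None).
  apply/existsP; rewrite -negb_forall; apply/negP => /forallP/(_ _)/eqP step.
  have const := ffun_stepwise_const (f := fun k => r k == None) step.
  by move: rj; rewrite const -(const i) ri.
rewrite /run_weight (@prodr_ord_eq0 _ _ k) ?mulr0 ?mul0r //=.
by move: switch; case: (r _) => [p|]; case: (r _) => [q|].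
Qed.

Lemma behavior_add1 : behavior (wa_add1 A) w = behavior A w + 1.
Proof.
rewrite !behaviorE.
pose lift_run (r : {ffun 'I_n.+1 -> Q}) := [ffun k => Some (r k)].
pose idle : {ffun 'I_n.+1 -> option Q} := [ffun _ => None].
have lift_inj : injective lift_run.
  by move=> r r' /ffunP eq_rr'; apply/ffunP => k; move: (eq_rr' k); rewrite !ffunE => -[].
rewrite (bigID (mem [set lift_run r | r in setT])) big_imset /=; last exact: in2W.
under eq_bigl do rewrite in_setT; under eq_bigr do rewrite run_weight_add1_Some.
congr (_ + _); have idle_new : idle \notin [set lift_run r | r in setT].
  by apply/imsetP => -[r _] /ffunP/(_ ord0); rewrite !ffunE.
rewrite (bigD1 idle) //= run_weight_add1_None big1 ?addr0 // => r /andP[r_new r_idle].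
have [i /eqP ri] : exists i, r i == None.
  apply/existsP; apply: contraR r_new => /existsPn all_Some.
  have [q0 _] : exists q0, r ord0 = Some q0 by case: (r ord0) (all_Some ord0) => // q; exists q.
  apply/imsetP; exists [ffun k => odflt q0 (r k)] => //.
  by apply/ffunP => k; rewrite !ffunE; case: (r k) (all_Some k).
have [j rj] : exists j, r j != None.
  apply/existsP; apply: contraR r_idle => /existsPn all_None.
  by apply/eqP/ffunP => k; rewrite ffunE; apply/eqP; rewrite -[_ == _]negbK all_None.
exact: run_weight_add1_mixed ri rj.
Qed.

End Add1.
End Behavior.

Section Product.
Local Open Scope ring_scope.
Variables (S : comPzSemiRingType) (Sigma : finType) (Q1 Q2 : finType).
Variables (A1 : wautomaton S Sigma Q1) (A2 : wautomaton S Sigma Q2).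

Definition wa_prod : wautomaton S Sigma (Q1 * Q2)%type :=
  WAutomaton (fun p a q => wa_sigma A1 p.1 a q.1 * wa_sigma A2 p.2 a q.2)
             (fun p => wa_iota A1 p.1 * wa_iota A2 p.2)
             (fun p => wa_tau A1 p.1 * wa_tau A2 p.2).

Lemma reversible_prod : reversible A1 -> reversible A2 -> reversible wa_prod.
Proof.
case=> fwd1 bwd1 [fwd2 bwd2]; split.
  move=> [p1 p2] [q1 q2] [q1' q2'] a /=.
  move=> /mulr_neq0_factors/andP[s1 s2] /mulr_neq0_factors/andP[s1' s2'].
  by rewrite (fwd1 _ _ _ _ s1 s1') (fwd2 _ _ _ _ s2 s2').
move=> [p1 p2] [p1' p2'] [q1 q2] a /=.
move=> /mulr_neq0_factors/andP[s1 s2] /mulr_neq0_factors/andP[s1' s2'].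
by rewrite (bwd1 _ _ _ _ s1 s1') (bwd2 _ _ _ _ s2 s2').
Qed.

Lemma behavior_prod w : behavior wa_prod w = behavior A1 w * behavior A2 w.
Proof.
rewrite !behaviorE mulr_suml; under [RHS]eq_bigr do rewrite mulr_sumr.
pose zip_run (r : {ffun 'I_(size w).+1 -> Q1} * {ffun _ -> Q2}) := [ffun k => (r.1 k, r.2 k)].
rewrite pair_bigA /= (reindex zip_run) /=; last first.
  apply: onW_bij.
  exists (fun r : {ffun _ -> Q1 * Q2} => ([ffun k => (r k).1], [ffun k => (r k).2])).
    by move=> [r1 r2]; congr pair; apply/ffunP => k; rewrite !ffunE.
  by move=> r; apply/ffunP => k; rewrite !ffunE; case: (r k).
apply: eq_bigr => -[r1 r2] _; rewrite /run_weight /= !ffunE /=.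
under eq_bigr => k _ do rewrite !ffunE /=.
by rewrite big_split /= [X in X * _]mulrACA mulrACA.
Qed.

End Product.

Section RevLF2.
Local Open Scope ring_scope.
Variable Sigma : finType.

Lemma F2_addr1_neq0 (x : 'F_2) : (x + 1 != 0) = (x == 0).
Proof. by case: x => -[|[|m]] lt_m2. Qed.

Lemma RevL_eq (L L' : pred (seq Sigma)) : L =1 L' -> RevL 'F_2 L -> RevL 'F_2 L'.
Proof. by move=> eqL [Q [A [revA suppA]]]; exists Q, A; split=> // w; rewrite -eqL. Qed.

Lemma RevL_compl (L : pred (seq Sigma)) : RevL 'F_2 L -> RevL 'F_2 [pred w | ~~ L w].
Proof.
move=> [Q [A [revA suppA]]]; exists (option Q), (wa_add1 A).
split=> [|w]; first exact: reversible_add1.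
by rewrite /support_lang behavior_add1 F2_addr1_neq0 /= suppA negbK.
Qed.

Lemma RevL_and (L1 L2 : pred (seq Sigma)) :
  RevL 'F_2 L1 -> RevL 'F_2 L2 -> RevL 'F_2 [pred w | L1 w && L2 w].
Proof.
move=> [Q1 [A1 [revA1 suppA1]]] [Q2 [A2 [revA2 suppA2]]].
exists (Q1 * Q2)%type, (wa_prod A1 A2); split=> [|w]; first exact: reversible_prod.
by rewrite /support_lang behavior_prod mulf_eq0 negb_or /= suppA1 suppA2.
Qed.

Lemma RevL_pred0 : RevL 'F_2 (@pred0 (seq Sigma)).
Proof.
exists unit, (WAutomaton (fun _ (_ : Sigma) _ => 0) (fun _ => 0) (fun _ : unit => 0 : 'F_2)).
split=> [|w]; first by split=> -[] [] [].
by rewrite /support_lang behaviorE big1 ?eqxx // => r _; rewrite /run_weight /= !mul0r.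
Qed.

Lemma RevL_predT : RevL 'F_2 (@predT (seq Sigma)).
Proof. exact: RevL_eq (RevL_compl RevL_pred0). Qed.

Lemma RevL_all (I : eqType) (L : I -> pred (seq Sigma)) (s : seq I) :
  (forall i, RevL 'F_2 (L i)) -> RevL 'F_2 [pred w | all (L^~ w) s].
Proof. by move=> RevL_L; elim: s => [|i s IHs]; [exact: RevL_predT | exact: RevL_and]. Qed.

Lemma RevL_forall (I : finType) (L : I -> pred (seq Sigma)) :
  (forall i, RevL 'F_2 (L i)) -> RevL 'F_2 [pred w | [forall i, L i w]].
Proof.
move=> /(RevL_all (enum I)); apply: RevL_eq => w /=.
by apply/allP/forallP => [all_L i | all_L i _]; [apply: all_L; rewrite mem_enum | apply: all_L].
Qed.

Lemma RevL_exists (I : finType) (L : I -> pred (seq Sigma)) :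
  (forall i, RevL 'F_2 (L i)) -> RevL 'F_2 [pred w | [exists i, L i w]].
Proof.
move=> RevL_L; have RevL_none := RevL_forall (fun i => RevL_compl (RevL_L i)).
apply: RevL_eq (RevL_compl RevL_none) => w /=.
by rewrite negb_forall; apply: eq_existsb => i; rewrite /= negbK.
Qed.

End RevLF2.

Theorem proposition6 (Sigma : finType) (Sigma_nonempty : 0 < #|Sigma|) :
  (forall L : pred (seq Sigma),
     RevL 'F_2 L -> RevL 'F_2 [pred w | ~~ L w]) /\
  (forall (I : finType) (L : I -> pred (seq Sigma)),
     (forall i, RevL 'F_2 (L i)) -> RevL 'F_2 [pred w | [forall i, L i w]]) /\
  (forall (I : finType) (L : I -> pred (seq Sigma)),
     (forall i, RevL 'F_2 (L i)) -> RevL 'F_2 [pred w | [exists i, L i w]]).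
Proof.
by split; [exact: RevL_compl | split; [exact: RevL_forall | exact: RevL_exists]].
Qed.
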